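(* Suppose the sensor messages are binary ($l=2$) and the densities $f_0,\dots,f_{M-1}$ are linearly independent. Then $Q_\alpha=Q_U$, i.e., the set of extreme points of $\bar Q$ coincides with the set of distribution vectors of ULQs.
   Context: A raw observation $X$ has density $f_m$ under state $m\in\{0,\dots,M-1\}$ (probability $\mathbf P_m$) with respect to a common $\sigma$-finite measure. Deterministic quantizers are measurable maps $\phi$ to $\{0,1\}$ (set $\Phi$); a randomized quantizer $\bar\phi=\sum_jp^j\phi^j$ is a probability distribution on a countable subset of $\Phi$; $\bar\Phi$ is the set of all quantizers. The distribution vector of $\bar\phi\in\bar\Phi$ is $q(\bar\phi)=(\mathbf P_m(\bar\phi(X)=i))_{0\le i\le l-1,\,0\le m\le M-1}\in\mathbb R^{Ml}$ (for randomized $\bar\phi$, $\mathbf P_m(\bar\phi(X)=i)=\sum_jp^j\mathbf P_m(\phi^j(X)=i)$). Let $Q=\{q(\phi):\phi\in\Phi\}$, $\bar Q=\{q(\bar\phi):\bar\phi\in\bar\Phi\}$ (which is the compact convex hull of the compact set $Q$), $Q_U=\{q(\phi):\phi\text{ a ULQ}\}$, and $Q_\alpha$ the set of extreme points of $\bar Q$. A deterministic quantizer $\phi$ is a ULQ if $\phi(X)=\mathbf 1\{\sum_ma_mf_m(X)>0\}$ for reals $a_0,\dots,a_{M-1}$ with $\mathbf P_{m'}\{\sum_ma_mf_m(X)=0\}=0$ for all $m'$. The densities are linearly independent if $\mathbf P_{m'}\{\sum_ma_mf_m(X)=0\}=0$ for every $m'$ and every $(a_m)$ not all zero. *)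

From HB Require Import structures.
From mathcomp Require Import all_boot all_order all_algebra.
From mathcomp Require Import all_classical all_reals all_analysis.
Set Implicit Arguments. Unset Strict Implicit. Unset Printing Implicit Defensive.
Import Order.TTheory GRing.Theory Num.Theory.
Import numFieldNormedType.Exports.
Local Open Scope classical_set_scope.
Local Open Scope ring_scope.

Section Quantizers.
Context {d : measure_display} {T : measurableType d} {R : realType}.
Variable (mu : {measure set T -> \bar R}) (M : nat) (f : 'I_M -> T -> R).

Definition Pm (m : 'I_M) (A : set T) : \bar R :=
  (\int[mu]_(x in A) (f m x)%:E)%E.

(* deterministic quantizer: measurable map X -> {0,1} (false = 0, true = 1) *)
Definition det_quantizer (phi : T -> bool) : Prop :=
  measurable (phi @^-1` [set true]).

Definition qdet (phi : T -> bool) : 'M[R]_(2, M) :=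
  \matrix_(i < 2, m < M) fine (Pm m [set x | nat_of_bool (phi x) = val i]).

Definition rand_quantizer (p : nat -> R) (phis : nat -> T -> bool) : Prop :=
  (forall j, 0 <= p j) /\ (forall j, det_quantizer (phis j)) /\
  (series p @ \oo --> (1 : R)).

Definition qrand (p : nat -> R) (phis : nat -> T -> bool) : 'M[R]_(2, M) :=
  \matrix_(i < 2, m < M) (\big[+%R/0%R]_(0 <= j <oo) (p j * qdet (phis j) i m)).

Definition Qbar : set 'M[R]_(2, M) :=
  [set q | exists p phis, rand_quantizer p phis /\ q = qrand p phis].

Definition lincomb (a : 'I_M -> R) (x : T) : R := \sum_(m < M) a m * f m x.

Definition ULQ (phi : T -> bool) : Prop :=
  det_quantizer phi /\
  exists a : 'I_M -> R,
    (forall x, phi x = (0 < lincomb a x)) /\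
    (forall m', Pm m' [set x | lincomb a x = 0] = 0%E).

Definition QU : set 'M[R]_(2, M) := [set qdet phi | phi in ULQ].

Definition densities_lin_indep : Prop :=
  forall a : 'I_M -> R, (exists m, a m != 0) ->
    forall m', Pm m' [set x | lincomb a x = 0] = 0%E.

End Quantizers.

Definition extreme_points {R : realType} {V : lmodType R} (S : set V) : set V :=
  [set x | S x /\ forall y z (t : R), S y -> S z -> 0 < t < 1 ->
            x = t *: y + (1 - t) *: z -> y = x /\ z = x].

From HB Require Import structures.
From mathcomp Require Import all_boot all_order all_algebra.
From mathcomp Require Import all_classical all_reals all_analysis.
From mathcomp Require Import measurable_realfun ring lra.
Set Implicit Arguments. Unset Strict Implicit. Unset Printing Implicit Defensive.
Import Order.TTheory GRing.Theory Num.Theory.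
Import numFieldNormedType.Exports.
Local Open Scope classical_set_scope.
Local Open Scope ring_scope.

(* For real coefficients a, the functional q |-> sum_m a_m P_m(phi = 1) is maximised over
   Qbar by the likelihood quantizer 1{sum_m a_m f_m > 0} (a bathtub argument), and only by
   it when {sum_m a_m f_m = 0} is null; a point that uniquely maximises a linear functional
   is extreme, so ULQs are extreme.  Conversely, if q is extreme then the convex cone spanned
   by the directions from q towards deterministic quantizers is pointed, hence not the whole
   space.  Finite-dimensional separation (Hahn-Banach by induction on the dimension) then
   gives a <> 0 for which no deterministic quantizer beats q, and, linear independence making
   the boundary of the ULQ of a null, the equality case forces q to be that ULQ. *)

(* R^n is modelled by the sequences vanishing from index n on, so that R^n sits in R^(n+1). *)
Section ConeSeparation.
Context {R : realType}.
Implicit Types (a b u v w x y : nat -> R) (K : set (nat -> R)).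

Definition dotn n a x : R := \sum_(i < n) a i * x i.
Definition supported n x := forall i, (n <= i)%N -> x i = 0.
Definition unitv n : nat -> R := fun i => (i == n)%:R.
Definition trunc n x : nat -> R := fun i => if (i < n)%N then x i else 0.

Lemma dotnD n a x y : dotn n a (x + y) = dotn n a x + dotn n a y.
Proof. by rewrite /dotn -big_split; apply: eq_bigr => i _; rewrite mulrDr. Qed.

Lemma dotnZ n a l x : dotn n a (l *: x) = l * dotn n a x.
Proof. by rewrite /dotn mulr_sumr; apply: eq_bigr => i _; rewrite mulrCA. Qed.

Lemma dotnB n a x y : dotn n a (x - y) = dotn n a x - dotn n a y.
Proof. by rewrite /dotn -sumrB; apply: eq_bigr => i _; rewrite mulrBr. Qed.

Lemma dotnS n a x : dotn n.+1 a x = dotn n a x + a n * x n.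
Proof. by rewrite /dotn big_ord_recr. Qed.

Lemma eq_dotn n a b x y : (forall i, (i < n)%N -> a i * x i = b i * y i) ->
  dotn n a x = dotn n b y.
Proof. by move=> e; apply: eq_bigr => i _; apply: e. Qed.

Lemma dotn_trunc n a x : dotn n a (trunc n x) = dotn n a x.
Proof. by apply: eq_dotn => i lt_in; rewrite /trunc lt_in. Qed.

Lemma supportedD n x y : supported n x -> supported n y -> supported n (x + y).
Proof. by move=> sx sy i ni; rewrite fctE sx ?sy ?addr0. Qed.

Lemma supportedZ n l x : supported n x -> supported n (l *: x).
Proof. by move=> sx i ni; rewrite fctE sx ?scaler0. Qed.

Lemma supported_unitv n k : (k < n)%N -> supported n (unitv k).
Proof. by move=> lt_kn i ni; rewrite /unitv gtn_eqF // (leq_trans lt_kn). Qed.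

Lemma supported_trunc n x : supported n (trunc n x).
Proof. by move=> i ni; rewrite /trunc ltnNge ni. Qed.

Lemma truncD n x y : trunc n (x + y) = trunc n x + trunc n y.
Proof. by apply/funext => i; rewrite /trunc !fctE; case: ifP; rewrite ?addr0. Qed.

Lemma truncZ n l x : trunc n (l *: x) = l *: trunc n x.
Proof. by apply/funext => i; rewrite /trunc !fctE; case: ifP; rewrite ?scaler0. Qed.

Lemma trunc_id n x : supported n x -> trunc n x = x.
Proof. by move=> sx; apply/funext => i; rewrite /trunc; case: ltnP => // /sx. Qed.

Lemma trunc_unitv_decomp n w :
  supported n.+1 w -> w = trunc n w + w n *: unitv n.
Proof.
move=> sw; apply/funext => i; rewrite !fctE /trunc /unitv.
case: ltngtP => [_|lt_ni|->] /=; rewrite ?scaler0 ?scaler1 ?addr0 ?add0r //.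
exact: sw.
Qed.

Section HahnBanach.
Variable g : (nat -> R) -> R.
Hypothesis gD : forall x y, g (x + y) <= g x + g y.
Hypothesis gZ : forall l x, 0 < l -> g (l *: x) = l * g x.

Lemma sublinear_scale_inv l x y : 0 < l -> g (x + l *: y) = l * g (l^-1 *: x + y).
Proof.
by move=> l0; rewrite -gZ // scalerDr scalerA mulfV ?gt_eqF // scale1r.
Qed.

Lemma hahn_banach_step n a :
  (forall x, supported n x -> dotn n a x <= g x) ->
  exists c, forall u t, supported n u ->
    dotn n a u + t * c <= g (u + t *: unitv n).
Proof.
move=> ag.
pose S := [set dotn n a v - g (v - unitv n) | v in supported n].
have S_ub w : supported n w -> ubound S (g (w + unitv n) - dotn n a w).
  move=> sw _ [v sv <-].
  have := ag _ (supportedD sv sw); rewrite dotnD.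
  have -> : v + w = (v - unitv n) + (w + unitv n) by rewrite addrACA addNr addr0.
  by move: (gD (v - unitv n) (w + unitv n)); lra.
have S0 : S !=set0 by exists (dotn n a 0 - g (0 - unitv n)); exists 0.
have S_bounded : has_ubound S by exists (g (0 + unitv n) - dotn n a 0); exact: S_ub.
exists (sup S) => u t su.
have [t_lt0|t_gt0|->] := ltgtP t 0; last by rewrite mul0r scale0r !addr0; exact: ag.
- have s_gt0 : 0 < - t by rewrite oppr_gt0.
  have : dotn n a ((- t)^-1 *: u) - g ((- t)^-1 *: u - unitv n) <= sup S.
    by apply: ub_le_sup => //; exists ((- t)^-1 *: u) => //; exact: supportedZ.
  rewrite dotnZ -(ler_pM2l s_gt0) mulrBr mulrA mulfV ?gt_eqF // mul1r.
  by rewrite -(sublinear_scale_inv _ _ s_gt0) scaleNr scalerN opprK; lra.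
- have : sup S <= g (t^-1 *: u + unitv n) - dotn n a (t^-1 *: u).
    by apply: ge_sup => //; apply: S_ub; exact: supportedZ.
  rewrite dotnZ -(ler_pM2l t_gt0) mulrBr mulrA mulfV ?gt_eqF // mul1r.
  by rewrite -(sublinear_scale_inv _ _ t_gt0); lra.
Qed.

Theorem finite_hahn_banach n :
  exists a, forall x, supported n x -> dotn n a x <= g x.
Proof.
elim: n => [|n [a ag]].
  exists 0 => x sx; rewrite /dotn big_ord0.
  have -> : x = 0 by apply/funext => i; rewrite sx.
  have g0 : g 0 = 2 * g 0 by rewrite -gZ // scaler0.
  lra.
have [c hc] := hahn_banach_step ag.
exists (fun i => if i == n then c else a i) => x sx.
rewrite dotnS eqxx (eq_dotn (b := a) (y := x)); last by move=> i /ltn_eqF ->.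
rewrite -dotn_trunc [in g _](trunc_unitv_decomp sx) mulrC.
by apply: hc; exact: supported_trunc.
Qed.

End HahnBanach.

Definition cone n K := [/\ K `<=` supported n, K 0,
  forall x y, K x -> K y -> K (x + y) &
  forall l x, 0 < l -> K x -> K (l *: x)].

Section RaySeparation.
Variables (n : nat) (K : set (nat -> R)) (s : R).
Hypothesis coneK : cone n.+1 K.
Hypothesis s_neq0 : s != 0.
Hypothesis trunc_onto : forall y, supported n y -> exists2 w, K w & trunc n w = y.
Hypothesis ray_ge0 : forall t, K ((t * s) *: unitv n) -> 0 <= t.

Let F u := [set t | K (u + (t * s) *: unitv n)].

Let F_add u1 u2 t1 t2 : F u1 t1 -> F u2 t2 -> F (u1 + u2) (t1 + t2).
Proof.
move=> Kt1 Kt2; case: coneK => _ _ KD _; rewrite /F /= mulrDl scalerDl.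
by rewrite addrACA; exact: KD.
Qed.

Let F_scale l u t : 0 < l -> F u t -> F (l *: u) (l * t).
Proof.
move=> l_gt0 Kt; case: coneK => _ _ _ KZ; rewrite /F /= -mulrA -scalerA -scalerDr.
exact: KZ.
Qed.

Let F_neq0 u : supported n u -> F u !=set0.
Proof.
move=> su; have [w Kw <-] := trunc_onto su; exists (w n / s).
rewrite /F /= divfK // -trunc_unitv_decomp //; case: coneK => Ksupp _ _ _.
exact: Ksupp.
Qed.

Let F_lbound u : supported n u -> has_lbound (F u).
Proof.
move=> su; have [t' Ft'] := F_neq0 (supportedZ (-1) su).
exists (- t') => t Ft; have := F_add Ft Ft'.
by rewrite /F /= scaleN1r addrN add0r => /ray_ge0; lra.
Qed.

(* The height at which the ray from [trunc n x] in direction [s *: unitv n] enters [K]: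
   it is sublinear, and a linear minorant of it yields the separating functional. *)
Let g x := inf (F (trunc n x)).

Let gD x y : g (x + y) <= g x + g y.
Proof.
have sx : supported n (trunc n x) by exact: supported_trunc.
have sy : supported n (trunc n y) by exact: supported_trunc.
rewrite /g truncD -inf_sumE; last 2 first.
- by split; [exact: F_neq0 | exact: F_lbound].
- by split; [exact: F_neq0 | exact: F_lbound].
apply: lb_le_inf.
  have [[t1 Ft1] [t2 Ft2]] := (F_neq0 sx, F_neq0 sy).
  by exists (t1 + t2), t1 => //; exists t2.
move=> _ [t1 Ft1 [t2 Ft2 <-]]; apply: ge_inf; last exact: F_add.
exact/F_lbound/supportedD.
Qed.

Let inf_F_scale l u : supported n u -> 0 < l -> inf (F (l *: u)) <= l * inf (F u).
Proof.
move=> su l_gt0; rewrite mulrC -ler_pdivrMr //.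
apply: lb_le_inf; first exact: F_neq0.
move=> t Ft; rewrite ler_pdivrMr // mulrC; apply: ge_inf; last exact: F_scale.
exact/F_lbound/supportedZ.
Qed.

Let gZ l x : 0 < l -> g (l *: x) = l * g x.
Proof.
move=> l_gt0; have sx : supported n (trunc n x) by exact: supported_trunc.
rewrite /g truncZ.
apply: le_anti; rewrite inf_F_scale //=.
have linv_gt0 : 0 < l^-1 by rewrite invr_gt0.
rewrite -ler_pdivlMl // -{1}(scale1r (trunc n x)) -(mulVf (lt0r_neq0 l_gt0)) -scalerA.
by apply: inf_F_scale => //; exact: supportedZ.
Qed.

Lemma cone_separation_ray :
  exists a, a n != 0 /\ forall w, K w -> dotn n.+1 a w <= 0.
Proof.
have [b bg] := finite_hahn_banach gD gZ n.
exists (fun i => if i == n then - s^-1 else b i); split.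
  by rewrite eqxx oppr_eq0 invr_eq0.
move=> w Kw; have sw : supported n.+1 w by case: coneK => Ksupp _ _ _; exact: Ksupp.
rewrite dotnS eqxx (eq_dotn (b := b) (y := trunc n w)); last first.
  by move=> i lt_in; rewrite (ltn_eqF lt_in) /trunc lt_in.
have : g (trunc n w) <= w n / s.
  apply: ge_inf; first exact/F_lbound/supported_trunc.
  rewrite /F /= divfK //.
  have -> : trunc n (trunc n w) = trunc n w by apply: trunc_id; exact: supported_trunc.
  by rewrite -trunc_unitv_decomp.
have := bg _ (@supported_trunc n w); rewrite mulNr mulrC; lra.
Qed.

End RaySeparation.

Lemma cone_trunc n K : cone n.+1 K -> cone n (trunc n @` K).
Proof.
case=> _ K0 KD KZ; split.
- by move=> _ [w _ <-]; exact: supported_trunc.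
- by exists 0 => //; apply/funext => i; rewrite /trunc; case: ifP.
- by move=> _ _ [x Kx <-] [y Ky <-]; exists (x + y); [exact: KD | exact: truncD].
- by move=> l _ l_gt0 [x Kx <-]; exists (l *: x); [exact: KZ | exact: truncZ].
Qed.

Lemma cone_rays_full n K t0 t1 : cone n.+1 K ->
  (forall u, supported n u -> exists2 w, K w & trunc n w = u) ->
  t0 < 0 -> 0 < t1 -> K (t0 *: unitv n) -> K (t1 *: unitv n) ->
  supported n.+1 `<=` K.
Proof.
move=> [Ksupp K0 KD KZ] trunc_onto t0_lt0 t1_gt0 Kt0 Kt1 y sy.
have K_ray d : K (d *: unitv n).
  have ray_from t : 0 < d / t -> K (t *: unitv n) -> K (d *: unitv n).
    move=> ratio_gt0 /(KZ _ _ ratio_gt0); rewrite scalerA divfK //.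
    by apply: contraTneq ratio_gt0 => ->; rewrite invr0 mulr0 ltxx.
  have [d_lt0|d_gt0|->] := ltgtP d 0; last by rewrite scale0r.
  - by apply: ray_from Kt0; rewrite ltr_ndivlMr // mul0r.
  - by apply: ray_from Kt1; rewrite divr_gt0.
have [w Kw trunc_w] := trunc_onto _ (@supported_trunc n y).
have trunc_wE : trunc n w = w - w n *: unitv n.
  by rewrite {2}(trunc_unitv_decomp (Ksupp _ Kw)) addrK.
have -> : y = w + (y n - w n) *: unitv n.
  by rewrite {1}(trunc_unitv_decomp sy) -trunc_w trunc_wE scalerBl addrA addrAC.
exact: KD.
Qed.

Theorem cone_separation n K : cone n K -> (exists2 y, supported n y & ~ K y) ->
  exists a, (exists2 i, (i < n)%N & a i != 0) /\ forall w, K w -> dotn n a w <= 0.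
Proof.
elim: n K => [|n IH] K coneK [y sy Ky].
  case: Ky; have -> : y = 0 by apply/funext => i; rewrite sy.
  by case: coneK.
have [[z sz Kz]|] := pselect (exists2 z, supported n z & ~ (trunc n @` K) z).
  have [a [[i lt_in ai] aK]] := IH _ (cone_trunc coneK) (ex_intro2 _ _ z sz Kz).
  exists (fun j => if j == n then 0 else a j); split.
    by exists i; rewrite ?(ltn_eqF lt_in) // ltnW.
  move=> w Kw; rewrite dotnS eqxx mul0r addr0 -dotn_trunc.
  rewrite (eq_dotn (b := a) (y := trunc n w)); last by move=> j /ltn_eqF ->.
  by apply: aK; exists w.
move=> /forall2NP trunc_onto'.
have trunc_onto u : supported n u -> exists2 w, K w & trunc n w = u.
  by move=> su; have [//|/contrapT] := trunc_onto' u.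
have [ray_ge0|/existsNP[t0 /not_implyP[Kt0 /negP]]] :=
    pselect (forall t, K (t *: unitv n) -> 0 <= t).
  have ray1_ge0 t : K ((t * 1) *: unitv n) -> 0 <= t by rewrite mulr1; exact: ray_ge0.
  have [a [an aK]] := cone_separation_ray coneK (oner_neq0 _) trunc_onto ray1_ge0.
  by exists a; split => //; exists n.
rewrite -ltNge => t0_lt0.
have ray_le0 t : K (t *: unitv n) -> t <= 0.
  rewrite leNgt; apply: contraPN => t_gt0 Kt; apply: Ky.
  exact: (cone_rays_full coneK trunc_onto t0_lt0 t_gt0 Kt0 Kt).
have rayN1_ge0 t : K ((t * -1) *: unitv n) -> 0 <= t.
  by rewrite mulrN1 => /ray_le0; rewrite oppr_le0.
have N1_neq0 : -1 != 0 :> R by rewrite oppr_eq0 oner_eq0.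
have [a [an aK]] := cone_separation_ray coneK N1_neq0 trunc_onto rayN1_ge0.
by exists a; split => //; exists n.
Qed.
End ConeSeparation.

Section NonnegSeries.
Variable R : realType.
Implicit Types (p b u v : nat -> R).

Lemma series_le_lim v (l : R) : (forall j, 0 <= v j) ->
  series v @ \oo --> l -> forall n, series v n <= l.
Proof.
move=> v_ge0 vl n; have v_cvg : cvgn (series v) by apply/cvg_ex; exists l.
rewrite -(cvg_lim _ vl) //; apply: nondecreasing_cvgn_le v_cvg n => i j le_ij.
by rewrite !seriesEnat; exact: nondecreasing_series.
Qed.

Lemma series_lim_eq0 v : (forall j, 0 <= v j) ->
  series v @ \oo --> (0 : R) -> forall j, v j = 0.
Proof.
move=> v_ge0 v0 j; apply/eqP; rewrite eq_le v_ge0 andbT.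
have := series_le_lim v_ge0 v0 j.+1; rewrite seriesEnat /= big_nat_recr //=.
have : 0 <= \sum_(0 <= k < j) v k by apply: sumr_ge0.
lra.
Qed.

Lemma is_cvg_series_weighted p b : (forall j, 0 <= p j) ->
  series p @ \oo --> (1 : R) -> (forall j, 0 <= b j <= 1) ->
  cvgn (series (fun j => p j * b j)).
Proof.
move=> p_ge0 p1 b01; apply: nondecreasing_is_cvgn.
  move=> i j le_ij; rewrite !seriesEnat; apply: nondecreasing_series => // k _ _.
  by have /andP[b0 _] := b01 k; exact: mulr_ge0.
exists 1 => _ [n _ <-]; apply: le_trans (series_le_lim p_ge0 p1 n).
rewrite !seriesEnat; apply: ler_sum => j _; have /andP[b0 b1] := b01 j.
by rewrite -[leRHS]mulr1 ler_wpM2l.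
Qed.

Lemma cvg_series_recl u (l : R) :
  u 0%N + series (fun j => u j.+1) n @[n --> \oo] --> l -> series u @ \oo --> l.
Proof.
move=> ul; rewrite -cvg_shiftS; suff -> : [sequence series u n.+1]_n =
    (fun n => u 0%N + series (fun j => u j.+1) n) by [].
by apply/funext => n; rewrite /= !seriesEnat /= big_nat_recl.
Qed.

End NonnegSeries.

Section RintegralFacts.
Variables (d : measure_display) (T : measurableType d) (R : realType).
Variable mu : {measure set T -> \bar R}.
Implicit Types (A B Z : set T) (g h : T -> R).

Lemma integrable_sumR I (s : seq I) (h : I -> T -> R) A : measurable A ->
  (forall i, mu.-integrable A (EFin \o h i)) ->
  mu.-integrable A (EFin \o (fun x => \sum_(i <- s) h i x)).
Proof.
move=> mA hi; have -> : EFin \o (fun x => \sum_(i <- s) h i x) =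
    (fun x => \sum_(i <- s) (EFin \o h i) x)%E.
  by apply/funext => x; rewrite /= sumEFin.
exact: integrable_sum.
Qed.

Lemma Rintegral_sum I (s : seq I) (h : I -> T -> R) A : measurable A ->
  (forall i, mu.-integrable A (EFin \o h i)) ->
  Rintegral mu A (fun x => \sum_(i <- s) h i x) = \sum_(i <- s) Rintegral mu A (h i).
Proof.
move=> mA hi; elim: s => [|i s IHs].
  by rewrite big_nil; under eq_Rintegral do rewrite big_nil; rewrite Rintegral_cst ?mul0r.
rewrite big_cons -IHs; under eq_Rintegral do rewrite big_cons.
by rewrite RintegralD //; exact: integrable_sumR.
Qed.

Lemma Rintegral_setID A B g : measurable A -> measurable B ->
  mu.-integrable A (EFin \o g) ->
  Rintegral mu A g = Rintegral mu (A `&` B) g + Rintegral mu (A `\` B) g.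
Proof.
move=> mA mB gA; rewrite -{1}(setUIDK A B) Rintegral_setU ?setUIDK //.
- exact: measurableI.
- exact: measurableD.
- by apply/disj_set2P; rewrite setDE setIACA setICr setI0.
Qed.

Lemma Rintegral_null_set A g : measurable A -> measurable_fun A g ->
  mu A = 0%E -> Rintegral mu A g = 0.
Proof.
by move=> mA mg A0; rewrite /Rintegral null_set_integral //; exact/measurable_EFinP.
Qed.

Lemma null_set_Rintegral_gt0 A g : measurable A -> measurable_fun A g ->
  mu.-integrable A (EFin \o g) -> (forall x, A x -> 0 < g x) ->
  Rintegral mu A g = 0 -> mu A = 0%E.
Proof.
move=> mA mg gA g_gt0 gA0.
have gA0' : (\int[mu]_(x in A) (g x)%:E = 0)%E.
  by rewrite -(fineK (integrable_fin_num mA gA)); move: gA0; rewrite /Rintegral => ->.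
have : (\int[mu]_(x in A) `|(g x)%:E| = 0)%E.
  rewrite -gA0'; apply: eq_integral => x /set_mem Ax.
  by rewrite gee0_abs // lee_fin ltW // g_gt0.
move/(ae_eq_integral_abs mu mA ((measurable_EFinP _ _).2 mg)).
move=> [N [mN N0 subN]]; apply/eqP; rewrite eq_le measure_ge0 andbT -N0.
apply: le_measure; rewrite ?inE // => x Ax; apply: subN => /= /(_ Ax) /eqP.
by apply/negP; rewrite eqe gt_eqF // g_gt0.
Qed.

Lemma Rintegral_eq_of_diff_null g A B Z :
  measurable A -> measurable B -> measurable Z ->
  measurable_fun setT g -> (forall x, 0 <= g x) -> mu.-integrable setT (EFin \o g) ->
  mu (B `\` A) = 0%E -> mu ((A `\` B) `\` Z) = 0%E -> Rintegral mu Z g = 0 ->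
  Rintegral mu A g = Rintegral mu B g.
Proof.
move=> mA mB mZ mg g_ge0 ig BA0 ABZ0 gZ0.
have gS C : measurable C -> mu.-integrable C (EFin \o g) by move=> mC; exact: integrableS ig.
have mgS C : measurable_fun C g by exact: measurable_funS mg.
have mAB : measurable (A `\` B) by exact: measurableD.
rewrite (Rintegral_setID mA mB (gS _ mA)) (Rintegral_setID mB mA (gS _ mB)) setIC.
rewrite (Rintegral_null_set (measurableD mB mA) (mgS _) BA0); congr (_ + _).
rewrite (Rintegral_setID mAB mZ (gS _ mAB)).
rewrite (Rintegral_null_set (measurableD mAB mZ) (mgS _) ABZ0).
rewrite addr0; apply/eqP; rewrite eq_le Rintegral_ge0 // andbT -gZ0.
rewrite (Rintegral_setID mZ mAB (gS _ mZ)) setIC lerDl.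
by apply: Rintegral_ge0.
Qed.

Lemma measurable_pos_set h : measurable_fun setT h -> measurable [set x | 0 < h x].
Proof.
move=> mh; have := mh measurableT _ (measurable_itv `]0, +oo[); rewrite setTI.
by congr measurable; apply/seteqP; split => x /=; rewrite in_itv /= andbT.
Qed.

Lemma measurable_zero_set h : measurable_fun setT h -> measurable [set x | h x = 0].
Proof. by move=> mh; have := mh measurableT _ (measurable_set1 0); rewrite setTI. Qed.

Section PositiveSet.
Variable h : T -> R.
Hypothesis mh : measurable_fun setT h.
Hypothesis ih : mu.-integrable setT (EFin \o h).

Let S := [set x | 0 < h x].

Let mS : measurable S. Proof. exact: measurable_pos_set. Qed.

Let ihS A : measurable A -> mu.-integrable A (EFin \o h).
Proof. by move=> mA; exact: integrableS ih. Qed.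

Let ihNS A : measurable A -> mu.-integrable A (EFin \o (fun x => - h x)).
Proof.
move=> mA; have -> : EFin \o (fun x => - h x) = (-%E \o (EFin \o h))%E by [].
exact/integrableN/ihS.
Qed.

Let Rintegral_pos_setB P : measurable P ->
  Rintegral mu S h - Rintegral mu P h =
  Rintegral mu (S `\` P) h + Rintegral mu (P `\` S) (fun x => - h x).
Proof.
move=> mP; rewrite (Rintegral_setID mS mP (ihS mS)) (Rintegral_setID mP mS (ihS mP)).
have mPS : measurable (P `\` S) by exact: measurableD.
under [X in _ = _ + X]eq_Rintegral do rewrite -mulN1r.
rewrite RintegralZl //; last exact: ihS.
rewrite [P `&` S]setIC; lra.
Qed.

Let Rintegral_posD_ge0 P : 0 <= Rintegral mu (S `\` P) h.
Proof. by apply: Rintegral_ge0 => x [Sx _]; exact: ltW. Qed.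

Let Rintegral_negD_ge0 P : 0 <= Rintegral mu (P `\` S) (fun x => - h x).
Proof. by apply: Rintegral_ge0 => x [_ /negP]; rewrite -leNgt oppr_ge0. Qed.

Lemma Rintegral_le_pos_set P : measurable P ->
  Rintegral mu P h <= Rintegral mu [set x | 0 < h x] h.
Proof.
move=> mP; have := Rintegral_pos_setB mP.
by have := Rintegral_posD_ge0 P; have := Rintegral_negD_ge0 P; lra.
Qed.

Lemma Rintegral_eq_pos_set P : measurable P ->
  Rintegral mu P h = Rintegral mu [set x | 0 < h x] h ->
  mu ([set x | 0 < h x] `\` P) = 0%E /\
  mu ((P `\` [set x | 0 < h x]) `\` [set x | h x = 0]) = 0%E.
Proof.
move=> mP eqPS; have := Rintegral_pos_setB mP; rewrite -eqPS subrr.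
have := Rintegral_posD_ge0 P; have := Rintegral_negD_ge0 P.
move=> neg_ge0 pos_ge0 sum0.
have mSP : measurable (S `\` P) by exact: measurableD.
have mPS : measurable (P `\` S) by exact: measurableD.
have mZ := measurable_zero_set mh.
have mhN C : measurable_fun C (fun x => - h x).
  by apply: measurable_funS (measurable_funN mh).
split.
  apply: null_set_Rintegral_gt0 (ihS mSP) _ _ => //; first exact: measurable_funS mh.
    by move=> x [].
  lra.
have mPSZ : measurable ((P `\` S) `\` [set x | h x = 0]) by exact: measurableD.
apply: null_set_Rintegral_gt0 (mhN _) (ihNS mPSZ) _ _ => //.
  move=> x [[_ /negP]]; rewrite -leNgt oppr_gt0 lt_neqAle => -> /eqP.
  by rewrite andbT.
have Z0 : Rintegral mu ((P `\` S) `&` [set x | h x = 0]) (fun x => - h x) = 0.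
  rewrite (@eq_Rintegral _ _ _ _ _ (fun=> 0)) ?Rintegral_cst ?mul0r //.
    exact: measurableI.
  by move=> x /set_mem [_ ->]; rewrite oppr0.
have negD0 : Rintegral mu (P `\` S) (fun x => - h x) = 0 by lra.
by rewrite (Rintegral_setID mPS mZ (ihNS mPS)) Z0 add0r in negD0.
Qed.

End PositiveSet.
End RintegralFacts.

Section Quantizers.
Variables (d : measure_display) (T : measurableType d) (R : realType).
Variables (mu : {measure set T -> \bar R}) (M : nat) (f : 'I_M -> T -> R).
Hypothesis f_meas : forall m, measurable_fun setT (f m).
Hypothesis f_ge0 : forall m x, 0 <= f m x.
Hypothesis f_int1 : forall m, (\int[mu]_x (f m x)%:E)%E = 1%E.

Implicit Types (phi psi : T -> bool) (p : nat -> R) (phis : nat -> T -> bool).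
Implicit Types (q r : 'M[R]_(2, M)) (a : 'I_M -> R) (A : set T).

Lemma integrable_density m : mu.-integrable setT (EFin \o f m).
Proof.
apply/integrableP; split; first exact/measurable_EFinP.
under eq_integral do rewrite /= ger0_norm ?f_ge0 //.
by rewrite f_int1 ltry.
Qed.

Lemma Rintegral_density_setT m : Rintegral mu setT (f m) = 1.
Proof. by rewrite /Rintegral f_int1. Qed.

Lemma measurable_lincomb a : measurable_fun setT (lincomb f a).
Proof.
apply: measurable_sum => m.
by apply: measurable_funM => //; exact: measurable_cst.
Qed.

Let integrable_scaled_density a m A : measurable A ->
  mu.-integrable A (EFin \o (fun x => a m * f m x)).
Proof.
move=> mA; have -> : EFin \o (fun x => a m * f m x) = (fun x => (a m)%:E * (f m x)%:E)%E.
  by apply/funext => x; rewrite /= EFinM.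
by apply/integrableZl/(integrableS measurableT) => //; exact: integrable_density.
Qed.

Lemma integrable_lincomb a : mu.-integrable setT (EFin \o lincomb f a).
Proof. by apply: integrable_sumR => // m; exact: integrable_scaled_density. Qed.

Lemma Rintegral_lincomb a A : measurable A ->
  Rintegral mu A (lincomb f a) = \sum_(m < M) a m * Rintegral mu A (f m).
Proof.
move=> mA; rewrite Rintegral_sum // => [|m]; last exact: integrable_scaled_density.
apply: eq_bigr => m _.
rewrite RintegralZl //; apply: (integrableS measurableT) => //; exact: integrable_density.
Qed.

Lemma measurable_det phi : det_quantizer phi -> measurable [set x | phi x].
Proof. by rewrite /det_quantizer; congr measurable; apply/seteqP; split => x. Qed.

Lemma qdet1E phi m : qdet mu f phi ord_max m = Rintegral mu [set x | phi x] (f m).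
Proof. by rewrite mxE; congr Rintegral; apply/seteqP; split => x /=; case: (phi x). Qed.

Lemma qdet0E phi m : det_quantizer phi ->
  qdet mu f phi ord0 m = 1 - qdet mu f phi ord_max m.
Proof.
move=> /measurable_det mphi; rewrite qdet1E mxE.
rewrite (_ : fine _ = Rintegral mu (~` [set x | phi x]) (f m)); last first.
  by congr Rintegral; apply/seteqP; split => x /=; case: (phi x).
have := Rintegral_setID measurableT mphi (integrable_density m).
by rewrite setTI setTD Rintegral_density_setT; lra.
Qed.

Lemma ord2_cases (i : 'I_2) : i = ord0 \/ i = ord_max.
Proof. by case: i => [[|[|//]]] ?; [left | right]; apply: val_inj. Qed.

Lemma qdet_ge0_le1 phi i m : det_quantizer phi -> 0 <= qdet mu f phi i m <= 1.
Proof.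
move=> dphi; have := Rintegral_setID measurableT (measurable_det dphi) (integrable_density m).
rewrite setTI setTD Rintegral_density_setT -qdet1E.
have := @Rintegral_ge0 _ _ _ mu (~` [set x | phi x]) (f m) (fun x _ => f_ge0 m x).
have := @Rintegral_ge0 _ _ _ mu [set x | phi x] (f m) (fun x _ => f_ge0 m x).
rewrite -qdet1E.
by case: (ord2_cases i) => ->; rewrite ?qdet0E //; move=> *; apply/andP; split; lra.
Qed.

Lemma eq_qdet phi psi : det_quantizer phi -> det_quantizer psi ->
  (forall m, qdet mu f phi ord_max m = qdet mu f psi ord_max m) ->
  qdet mu f phi = qdet mu f psi.
Proof.
move=> dphi dpsi row1; apply/matrixP => i m.
by case: (ord2_cases i) => ->; rewrite ?qdet0E ?row1.
Qed.

Definition dotq a q := \sum_(m < M) a m * q ord_max m.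

Definition ulq a : T -> bool := fun x => 0 < lincomb f a x.

Lemma ulq_det a : det_quantizer (ulq a).
Proof.
rewrite /det_quantizer (_ : _ @^-1` _ = [set x | 0 < lincomb f a x]).
  exact/measurable_pos_set/measurable_lincomb.
by apply/seteqP; split => x.
Qed.

Lemma dotq_qdet a phi : det_quantizer phi ->
  dotq a (qdet mu f phi) = Rintegral mu [set x | phi x] (lincomb f a).
Proof.
move=> /measurable_det mphi; rewrite Rintegral_lincomb //.
by apply: eq_bigr => m _; rewrite qdet1E.
Qed.

Lemma dotq_qdet_le a phi : det_quantizer phi ->
  dotq a (qdet mu f phi) <= dotq a (qdet mu f (ulq a)).
Proof.
move=> dphi; rewrite !dotq_qdet //; last exact: ulq_det.
apply: Rintegral_le_pos_set; first exact: measurable_lincomb.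
  exact: integrable_lincomb.
exact: measurable_det.
Qed.

Lemma dotq_qdet_eq a phi : det_quantizer phi ->
  (forall m, Pm mu f m [set x | lincomb f a x = 0] = 0%E) ->
  dotq a (qdet mu f phi) = dotq a (qdet mu f (ulq a)) ->
  qdet mu f phi = qdet mu f (ulq a).
Proof.
move=> dphi Z0; rewrite !dotq_qdet //; last exact: ulq_det.
have [mphi mS] := (measurable_det dphi, measurable_det (ulq_det a)).
move=> /(Rintegral_eq_pos_set (measurable_lincomb a) (integrable_lincomb a) mphi).
move=> [null1 null2]; apply: (eq_qdet dphi (ulq_det a)) => m.
rewrite !qdet1E; apply: Rintegral_eq_of_diff_null null1 null2 _ => //.
- exact/measurable_zero_set/measurable_lincomb.
- exact: integrable_density.
- by rewrite /Rintegral; have := Z0 m; rewrite /Pm => ->.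
Qed.

Lemma qrand_cvg p phis : rand_quantizer p phis -> forall i m,
  series (fun j => p j * qdet mu f (phis j) i m) @ \oo --> qrand mu f p phis i m.
Proof.
move=> [p_ge0 [dphis p1]] i m; rewrite mxE; apply: is_cvg_series_weighted => // j.
exact: qdet_ge0_le1.
Qed.

Arguments qrand_cvg {p phis} _ i m.

Lemma qrand_const p phis Q : rand_quantizer p phis ->
  (forall j, p j != 0 -> qdet mu f (phis j) = Q) -> qrand mu f p phis = Q.
Proof.
move=> rq phisQ; apply/matrixP => i m; apply: (cvg_unique _ (qrand_cvg rq i m)) => //=.
have -> : series (fun j => p j * qdet mu f (phis j) i m) = (fun n => series p n * Q i m).
  apply/funext => n; rewrite !seriesEnat /= mulr_suml; apply: eq_bigr => j _.
  by have [->|/phisQ ->] := eqVneq (p j) 0; rewrite ?mul0r.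
by rewrite -[X in _ --> X]mul1r; apply: cvgMr_tmp; case: rq => _ [].
Qed.

Lemma qdet_Qbar phi : det_quantizer phi -> Qbar mu f (qdet mu f phi).
Proof.
move=> dphi; pose p (j : nat) : R := (j == 0%N)%:R.
have rq : rand_quantizer p (fun=> phi).
  split; first by move=> j; rewrite /p; case: (j == 0).
  split => //; apply: cvg_series_recl; apply: cvg_near_cst; apply: nearW => n.
  by rewrite /p /= seriesEnat /= big1 ?addr0.
by exists p, (fun=> phi); split => //; rewrite (qrand_const (Q := qdet mu f phi) rq).
Qed.

Lemma Qbar_row0 q m : Qbar mu f q -> q ord0 m = 1 - q ord_max m.
Proof.
move=> [p [phis [rq ->]]]; have [p_ge0 [dphis p1]] := rq.
apply: (cvg_unique _ (qrand_cvg rq ord0 m)) => //=.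
have -> : series (fun j => p j * qdet mu f (phis j) ord0 m) =
    (fun n => series p n - series (fun j => p j * qdet mu f (phis j) ord_max m) n).
  apply/funext => n; rewrite !seriesEnat /= -sumrB; apply: eq_bigr => j _.
  by rewrite qdet0E // mulrBr mulr1.
exact: cvgB p1 (qrand_cvg rq ord_max m).
Qed.

Lemma Qbar_mix q phi t : Qbar mu f q -> det_quantizer phi -> 0 <= t < 1 ->
  Qbar mu f (t *: qdet mu f phi + (1 - t) *: q).
Proof.
move=> [p [phis [rq ->]]] dphi /andP[t_ge0 t_lt1]; have [p_ge0 [dphis p1]] := rq.
pose p' j := if j is j'.+1 then (1 - t) * p j' else t.
pose phis' j := if j is j'.+1 then phis j' else phi.
have rq' : rand_quantizer p' phis'.
  split; first by case => [|j] //=; apply: mulr_ge0 => //; lra.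
  split; first by case.
  apply: cvg_series_recl => /=.
  have -> : (fun n => t + series (fun j => (1 - t) * p j) n) =
      (fun n => t + (1 - t) * series p n).
    by apply/funext => n; rewrite !seriesEnat /= mulr_sumr.
  rewrite -[X in _ --> X](_ : t + (1 - t) * 1 = 1); last by ring.
  exact: cvgD (cvg_cst t) (cvgMl_tmp p1).
exists p', phis'; split => //; apply/matrixP => i m.
rewrite mxE [X in X + _ = _]mxE [X in _ + X = _]mxE; apply/esym.
apply: (cvg_unique _ (qrand_cvg rq' i m)) => //=; apply: cvg_series_recl => /=.
have -> : (fun n => t * qdet mu f phi i m +
    series (fun j => (1 - t) * p j * qdet mu f (phis j) i m) n) =
    (fun n => t * qdet mu f phi i m +
      (1 - t) * series (fun j => p j * qdet mu f (phis j) i m) n).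
  apply/funext => n; rewrite !seriesEnat /= mulr_sumr.
  by congr (_ + _); apply: eq_bigr => j _; rewrite mulrA.
exact: cvgD (cvg_cst _) (cvgMl_tmp (qrand_cvg rq i m)).
Qed.

Lemma cvg_series_dotq a p phis : rand_quantizer p phis ->
  series (fun j => p j * dotq a (qdet mu f (phis j))) @ \oo -->
  dotq a (qrand mu f p phis).
Proof.
move=> rq; have -> : series (fun j => p j * dotq a (qdet mu f (phis j))) =
    (fun n => \sum_(m < M) a m * series (fun j => p j * qdet mu f (phis j) ord_max m) n).
  apply/funext => n; rewrite seriesEnat /=; under eq_bigr do rewrite mulr_sumr.
  rewrite exchange_big; apply: eq_bigr => m _; rewrite seriesEnat /= mulr_sumr.
  by apply: eq_bigr => j _; rewrite mulrCA.
by apply: (cvg_big add_continuous) => // m _; exact: cvgMl_tmp (qrand_cvg rq _ _).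
Qed.

Let dotq_gap_cvg a p phis : rand_quantizer p phis ->
  series (fun j => p j * (dotq a (qdet mu f (ulq a)) - dotq a (qdet mu f (phis j)))) @ \oo -->
  dotq a (qdet mu f (ulq a)) - dotq a (qrand mu f p phis).
Proof.
move=> rq; have [_ [_ p1]] := rq.
have -> : series (fun j => p j * (dotq a (qdet mu f (ulq a)) - dotq a (qdet mu f (phis j)))) =
    (fun n => dotq a (qdet mu f (ulq a)) * series p n -
      series (fun j => p j * dotq a (qdet mu f (phis j))) n).
  apply/funext => n; rewrite !seriesEnat /= mulr_sumr -sumrB.
  by apply: eq_bigr => j _; rewrite mulrBr mulrC.
rewrite -[X in _ --> X - _]mulr1.
by apply: cvgB; [exact: cvgMl_tmp p1 | exact: cvg_series_dotq].
Qed.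

Lemma dotq_Qbar_le a q : Qbar mu f q -> dotq a q <= dotq a (qdet mu f (ulq a)).
Proof.
move=> [p [phis [rq ->]]]; have [p_ge0 [dphis _]] := rq.
have gap_ge0 j : 0 <= p j * (dotq a (qdet mu f (ulq a)) - dotq a (qdet mu f (phis j))).
  by rewrite mulr_ge0 // subr_ge0 dotq_qdet_le.
have := series_le_lim gap_ge0 (dotq_gap_cvg rq) 0.
by rewrite seriesEnat /= big_geq // subr_ge0.
Qed.

Lemma dotq_Qbar_eq a q : Qbar mu f q ->
  (forall m, Pm mu f m [set x | lincomb f a x = 0] = 0%E) ->
  dotq a q = dotq a (qdet mu f (ulq a)) -> q = qdet mu f (ulq a).
Proof.
move=> [p [phis [rq ->]]] Z0 eq_dotq; have [p_ge0 [dphis _]] := rq.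
have gap_ge0 j : 0 <= p j * (dotq a (qdet mu f (ulq a)) - dotq a (qdet mu f (phis j))).
  by rewrite mulr_ge0 // subr_ge0 dotq_qdet_le.
have := dotq_gap_cvg (a := a) rq; rewrite eq_dotq subrr => /(series_lim_eq0 gap_ge0) gap0.
apply: qrand_const rq _ => j pj_neq0; apply: dotq_qdet_eq => //.
by apply/eqP; rewrite eq_sym -subr_eq0; move/eqP: (gap0 j); rewrite mulf_eq0 (negPf pj_neq0).
Qed.

Lemma dotq_mix a q r t : dotq a (t *: q + (1 - t) *: r) = t * dotq a q + (1 - t) * dotq a r.
Proof.
rewrite /dotq !mulr_sumr -big_split; apply: eq_bigr => m _.
by rewrite !mxE /=; ring.
Qed.

Lemma QU_extreme q : QU mu f q -> extreme_points (Qbar mu f) q.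
Proof.
move=> [phi [dphi [a [phiE Z0]]] <-].
have -> : phi = ulq a by apply/funext => x; rewrite phiE.
split; first exact/qdet_Qbar/ulq_det.
move=> y z t Qy Qz /andP[t_gt0 t_lt1] yzE.
have [le_y le_z] := (dotq_Qbar_le a Qy, dotq_Qbar_le a Qz).
have := dotq_mix a y z t; rewrite -yzE.
set D := dotq a (qdet mu f (ulq a)) in le_y le_z * => eqD.
have gap_y_ge0 : 0 <= t * (D - dotq a y) by rewrite mulr_ge0 //; lra.
have gap_z_ge0 : 0 <= (1 - t) * (D - dotq a z) by rewrite mulr_ge0 //; lra.
have gap_y : t * (D - dotq a y) = 0 by lra.
have gap_z : (1 - t) * (D - dotq a z) = 0 by lra.
have t1_gt0 : 0 < 1 - t by lra.
move/eqP: gap_y; move/eqP: gap_z.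
rewrite !mulf_eq0 (negPf (lt0r_neq0 t_gt0)) (negPf (lt0r_neq0 t1_gt0)) !subr_eq0 /=.
move=> /eqP eq_z /eqP eq_y.
by split; apply: dotq_Qbar_eq.
Qed.

(* The first row of a point of Qbar is determined by the second one (Qbar_row0), so points
   are compared through their second row, seen as a sequence supported in [0, M). *)
Definition vecq q : nat -> R := fun i => if insub i is Some m then q ord_max m else 0.

Lemma vecq_supported q : supported M (vecq q).
Proof. by move=> i le_Mi; rewrite /vecq insubN // -leqNgt. Qed.

Lemma vecqE q (m : 'I_M) : vecq q m = q ord_max m.
Proof. by rewrite /vecq valK. Qed.

Lemma vecq_mix q r t : vecq (t *: q + (1 - t) *: r) = t *: vecq q + (1 - t) *: vecq r.
Proof.
apply/funext => i; rewrite !fctE /vecq.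
by case: insubP => [m _ _|_]; rewrite ?mxE // !scaler0 addr0.
Qed.

Lemma dotn_vecq (a : nat -> R) q : dotn M a (vecq q) = dotq (fun m => a m) q.
Proof. by apply: eq_bigr => m _; rewrite vecqE. Qed.

Lemma eq_vecq q r : (forall m, q ord0 m = 1 - q ord_max m) ->
  (forall m, r ord0 m = 1 - r ord_max m) -> vecq q = vecq r -> q = r.
Proof.
move=> q0 r0 qr; have qr1 m : q ord_max m = r ord_max m by rewrite -!vecqE qr.
by apply/matrixP => i m; case: (ord2_cases i) => ->; rewrite ?q0 ?r0 qr1.
Qed.

Definition admissible (l : seq (R * (T -> bool))) :=
  List.Forall (fun x => 0 <= x.1 /\ det_quantizer x.2) l.

Definition dirsum q (l : seq (R * (T -> bool))) : nat -> R :=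
  \sum_(x <- l) x.1 *: (vecq (qdet mu f x.2) - vecq q).

Lemma admissible_cat l1 l2 : admissible l1 -> admissible l2 -> admissible (l1 ++ l2).
Proof. by elim=> //= x l1' x_adm _ IH adm2; constructor => //; exact: IH. Qed.

Lemma admissible_scale l (c : R) : 0 <= c ->
  admissible l -> admissible [seq (c * x.1, x.2) | x <- l].
Proof.
move=> c_ge0; elim=> //= x l' [x_ge0 dx] _ IH.
by constructor => //; split => //; exact: mulr_ge0.
Qed.

Lemma admissible_weight_ge0 l : admissible l -> 0 <= \sum_(x <- l) x.1.
Proof. by elim=> [|x l' [x_ge0 _] _ IH]; rewrite ?big_nil // big_cons addr_ge0. Qed.

Lemma Qbar_dirsum q l lam : Qbar mu f q -> admissible l -> 0 <= lam ->
  lam * \sum_(x <- l) x.1 < 1 ->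
  exists2 y, Qbar mu f y & vecq y = vecq q + lam *: dirsum q l.
Proof.
move=> Qq adm; elim: adm lam => [|[c phi] l' [c_ge0 dphi] adm IH] lam lam_ge0.
  by exists q => //; rewrite /dirsum big_nil scaler0 addr0.
rewrite big_cons /= => lt1.
have wsum_ge0 := admissible_weight_ge0 adm.
set s := \sum_(x <- l') x.1 in lt1 wsum_ge0.
set t := lam * c.
have t_ge0 : 0 <= t by exact: mulr_ge0.
have t_lt1 : t < 1 by have := mulr_ge0 lam_ge0 wsum_ge0; rewrite /t; lra.
have [y Qy yE] : exists2 y, Qbar mu f y & vecq y = vecq q + (lam / (1 - t)) *: dirsum q l'.
  apply: IH; first by rewrite divr_ge0 // subr_ge0 ltW.
  by rewrite mulrAC ltr_pdivrMr ?subr_gt0 // mul1r -/s /t; lra.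
exists (t *: qdet mu f phi + (1 - t) *: y); first by apply: Qbar_mix; rewrite ?t_ge0.
have t1_neq0 : 1 - t != 0 by rewrite subr_eq0 eq_sym lt_eqF.
rewrite vecq_mix yE /dirsum big_cons -/(dirsum q l') /=.
rewrite !scalerDr scalerA mulrCA divff // mulr1 !scalerA -/t scalerN scalerBl scale1r.
by rewrite !addrA [vecq q + _]addrC.
Qed.

Lemma extreme_dirsum_pointed q l1 l2 : extreme_points (Qbar mu f) q ->
  admissible l1 -> admissible l2 -> dirsum q l1 = - dirsum q l2 -> dirsum q l1 = 0.
Proof.
move=> [Qq ext] adm1 adm2 opp12.
have [w1_ge0 w2_ge0] := (admissible_weight_ge0 adm1, admissible_weight_ge0 adm2).
pose lam := (1 + \sum_(x <- l1) x.1 + \sum_(x <- l2) x.1)^-1.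
have lam_gt0 : 0 < lam by rewrite invr_gt0; lra.
have lam_lt1 w : 0 <= w -> w <= \sum_(x <- l1) x.1 + \sum_(x <- l2) x.1 -> lam * w < 1.
  by move=> w_ge0 w_le; rewrite mulrC ltr_pdivrMr; lra.
have [y1 Qy1 y1E] : exists2 y1, Qbar mu f y1 & vecq y1 = vecq q + lam *: dirsum q l1.
  by apply: Qbar_dirsum => //; [exact: ltW | apply: lam_lt1 => //; lra].
have [y2 Qy2 y2E] : exists2 y2, Qbar mu f y2 & vecq y2 = vecq q + lam *: dirsum q l2.
  by apply: Qbar_dirsum => //; [exact: ltW | apply: lam_lt1 => //; lra].
(* [y1] and [y2] lie on opposite sides of [q] along [dirsum q l1]. *)
have qE : q = 2^-1 *: y1 + (1 - 2^-1) *: y2.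
  apply: eq_vecq => [m|m|]; first exact: Qbar_row0.
    by rewrite !mxE !Qbar_row0 //; ring.
  have half : 1 - 2^-1 = 2^-1 :> R by rewrite {1}(splitr 1) mul1r addrK.
  rewrite vecq_mix y1E y2E half -scalerDr addrACA -scalerDr opp12 addNr scaler0 addr0.
  by rewrite -mulr2n -scalerMnr scalerMnl -mulr_natr mulVf ?pnatr_eq0 // scale1r.
have half_in01 : 0 < (2^-1 : R) < 1.
  by rewrite invr_gt0 ltr0n invf_lt1 ?ltr0n // ltr1n.
have [y1q _] := ext y1 y2 2^-1 Qy1 Qy2 half_in01 qE.
apply: (scalerI (lt0r_neq0 lam_gt0)); rewrite scaler0.
by apply: (addrI (vecq q)); rewrite -y1E y1q addr0.
Qed.

Definition direction_cone q := [set w | exists2 l, admissible l & w = dirsum q l].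

Lemma cone_direction_cone q : cone M (direction_cone q).
Proof.
split.
- move=> _ [l _ ->]; rewrite /dirsum; elim: l => [|x l IH].
    by rewrite big_nil => i _.
  rewrite big_cons; apply: supportedD IH; apply: supportedZ.
  by move=> i Mi; rewrite !fctE !vecq_supported // subrr.
- by exists [::]; [constructor | rewrite /dirsum big_nil].
- move=> _ _ [l1 adm1 ->] [l2 adm2 ->]; exists (l1 ++ l2); first exact: admissible_cat.
  by rewrite /dirsum big_cat.
- move=> c _ c_gt0 [l adm ->]; exists [seq (c * x.1, x.2) | x <- l].
    exact/admissible_scale/adm/ltW.
  by rewrite /dirsum big_map scaler_sumr; apply: eq_bigr => x _; rewrite scalerA.
Qed.

Lemma extreme_cone_proper q : (0 < M)%N -> extreme_points (Qbar mu f) q ->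
  exists2 y, supported M y & ~ direction_cone q y.
Proof.
move=> M_gt0 ext.
have e0_supp : supported M (unitv 0 : nat -> R) by exact: supported_unitv.
have [[l1 adm1 e0E]|] := pselect (direction_cone q (unitv 0)); last by exists (unitv 0).
exists (- unitv 0); first by move=> i Mi; rewrite fctE e0_supp ?oppr0.
move=> [l2 adm2 e0NE].
have : dirsum q l1 = 0.
  by apply: extreme_dirsum_pointed ext adm1 adm2 _; rewrite -e0E -e0NE opprK.
by rewrite -e0E => /(congr1 (fun v => v 0%N)); rewrite /unitv eqxx; exact/eqP/oner_neq0.
Qed.

Lemma ULQ_ulq a : (forall m, Pm mu f m [set x | lincomb f a x = 0] = 0%E) ->
  ULQ mu f (ulq a).
Proof. by move=> Z0; split; [exact: ulq_det | exists a]. Qed.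

Lemma extreme_QU q : densities_lin_indep mu f ->
  extreme_points (Qbar mu f) q -> QU mu f q.
Proof.
move=> indep ext; have [M0|M_gt0] := posnP M.
  have no_col (m : 'I_M) : False by case: m => m; rewrite M0.
  exists (ulq (fun=> 0)); last by apply/matrixP => i m; case: (no_col m).
  by apply: ULQ_ulq => m; case: (no_col m).
have [a [[i lt_iM ai] aK]] :=
  cone_separation (cone_direction_cone q) (extreme_cone_proper M_gt0 ext).
pose b (m : 'I_M) := a m.
have Z0 := indep b (ex_intro _ (Ordinal lt_iM) ai).
have K_ulq : direction_cone q (vecq (qdet mu f (ulq b)) - vecq q).
  exists [:: (1, ulq b)].
    by apply: List.Forall_cons => //; split; [exact: ler01 | exact: ulq_det].
  by rewrite /dirsum big_cons big_nil addr0 scale1r.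
have := aK _ K_ulq; rewrite dotnB !dotn_vecq subr_le0 => le_ulq.
exists (ulq b); first exact: ULQ_ulq.
have Qq := ext.1; apply/esym/dotq_Qbar_eq => //.
by apply/le_anti; rewrite le_ulq dotq_Qbar_le.
Qed.

End Quantizers.

Theorem lemmaA1 (d : measure_display) (T : measurableType d) (R : realType)
  (mu : {measure set T -> \bar R}) (M : nat) (f : 'I_M -> T -> R) :
  sigma_finite setT mu ->
  (forall m, measurable_fun setT (f m)) ->
  (forall m x, 0 <= f m x) ->
  (forall m, (\int[mu]_x (f m x)%:E)%E = 1%E) ->
  densities_lin_indep mu f ->
  extreme_points (Qbar mu f) = QU mu f.
Proof.
move=> _ f_meas f_ge0 f_int1 indep; apply/seteqP; split => q.
  exact: extreme_QU.
exact: QU_extreme.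
Qed.
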